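(* Let $h$ be a probability density on $\mathbb{R}^d$ that is $(\alpha,\beta)$-admissible for functions $\alpha,\beta:(0,\infty)\to(0,\infty)$, let $\epsilon>0$ and $k\in(0,2)$, and set $\alpha'=\alpha(k\epsilon)$ and $\beta'=\beta((2-k)\epsilon)$. Let $f:D^n\to\mathbb{R}^d$ and let $S:D^n\to(0,\infty)$ be a $\beta'$-smooth upper bound on the local sensitivity of $f$. Let $Z$ be a random variable with density $h$. Then the randomized algorithm $A(x)=f(x)+\frac{S(x)}{\alpha'}\cdot Z$ is $\epsilon$-differentially private.
   Context: $D^n$ denotes the set of datasets consisting of $n$ elements from a domain $D$. The Hamming distance is $d(x,y)=|\{i:x_i\neq y_i\}|$; $x,y$ are neighboring if $d(x,y)=1$. A randomized mechanism $M$ is $\epsilon$-differentially private if for all neighboring $x,y\in D^n$ and all measurable sets $\mathcal{S}$ of outputs, $\Pr[M(x)\in\mathcal{S}]\le e^{\epsilon}\Pr[M(y)\in\mathcal{S}]$. The local sensitivity of $f:D^n\to\mathbb{R}^d$ at $x$ is $LS_f(x)=\max_{y:d(x,y)=1}\|f(x)-f(y)\|_1$. For $\beta>0$, a function $S:D^n\to\mathbb{R}$ is a $\beta$-smooth upper bound on the local sensitivity of $f$ if $S(x)\ge LS_f(x)$ for all $x\in D^n$ and $S(x)\le e^{\beta}S(y)$ for all $x,y$ with $d(x,y)=1$. Given functions $\alpha,\beta:(0,\infty)\to(0,\infty)$, a probability density $h$ on $\mathbb{R}^d$ is $(\alpha,\beta)$-admissible if for every $\epsilon>0$, every $\Delta\in\mathbb{R}^d$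 with $\|\Delta\|_1\le\alpha(\epsilon)$, every $\lambda\in\mathbb{R}$ with $|\lambda|\le\beta(\epsilon)$, and every measurable $\mathcal{S}\subseteq\mathbb{R}^d$, with $Z\sim h$: (sliding) $\Pr[Z\in\mathcal{S}]\le e^{\epsilon/2}\Pr[Z\in\mathcal{S}+\Delta]$, and (dilation) $\Pr[Z\in\mathcal{S}]\le e^{\epsilon/2}\Pr[Z\in e^{\lambda}\cdot\mathcal{S}]$. *)

(* R^d is modelled as [d.-tuple R]
   with its canonical (product = Borel) sigma-algebra from mathcomp-analysis. *)
From HB Require Import structures.
From mathcomp Require Import all_boot all_order all_algebra.
From mathcomp Require Import all_classical all_reals all_analysis.
Set Implicit Arguments. Unset Strict Implicit. Unset Printing Implicit Defensive.
Import Order.TTheory GRing.Theory Num.Theory.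
Local Open Scope classical_set_scope.
Local Open Scope ring_scope.

Section Defs.
Variable R : realType.

Definition vadd (d : nat) (x y : d.-tuple R) : d.-tuple R :=
  [tuple tnth x i + tnth y i | i < d].
Definition vscale (d : nat) (c : R) (x : d.-tuple R) : d.-tuple R :=
  [tuple c * tnth x i | i < d].
Definition vsub (d : nat) (x y : d.-tuple R) : d.-tuple R :=
  [tuple tnth x i - tnth y i | i < d].
Definition l1norm (d : nat) (x : d.-tuple R) : R := \sum_(i < d) `|tnth x i|.

Definition set_translate (d : nat) (A : set (d.-tuple R)) (v : d.-tuple R) :=
  [set vadd s v | s in A].
Definition set_dilate (d : nat) (c : R) (A : set (d.-tuple R)) :=
  [set vscale c s | s in A].

Definition box (d : nat) (a b : d.-tuple R) : set (d.-tuple R) :=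
  [set x | forall i : 'I_d, tnth a i < tnth x i <= tnth b i].

(* lam is the Lebesgue measure on R^d: the (unique) measure on the Borel sets
   giving every box its volume *)
Definition is_lebesgue_measure (d : nat)
    (lam : {measure set (d.-tuple R) -> \bar R}) : Prop :=
  forall a b : d.-tuple R, (forall i, tnth a i <= tnth b i) ->
    lam (box a b) = (\prod_(i < d) (tnth b i - tnth a i))%:E.

Definition prob_density (d : nat) (lam : {measure set (d.-tuple R) -> \bar R})
    (h : d.-tuple R -> R) : Prop :=
  [/\ measurable_fun setT h, (forall z, 0 <= h z)
    & (\int[lam]_z (h z)%:E = 1)%E].

Definition dens_prob (d : nat) (lam : {measure set (d.-tuple R) -> \bar R})
    (h : d.-tuple R -> R) (A : set (d.-tuple R)) : \bar R :=
  (\int[lam]_(z in A) (h z)%:E)%E.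

Definition admissible (d : nat) (lam : {measure set (d.-tuple R) -> \bar R})
    (h : d.-tuple R -> R) (alpha beta : R -> R) : Prop :=
  forall (eps : R), 0 < eps ->
  forall (Delta : d.-tuple R), l1norm Delta <= alpha eps ->
  forall (lambda : R), `|lambda| <= beta eps ->
  forall A : set (d.-tuple R), measurable A ->
    (dens_prob lam h A <= (expR (eps / 2))%:E * dens_prob lam h (set_translate A Delta))%E /\
    (dens_prob lam h A <= (expR (eps / 2))%:E * dens_prob lam h (set_dilate (expR lambda) A))%E.

End Defs.

Section Privacy.
Variable R : realType.
Variables (D : Type) (n : nat).

Definition neighbors (x y : 'I_n -> D) : Prop :=
  exists i : 'I_n, x i <> y i /\ forall j : 'I_n, j <> i -> x j = y j.

Definition local_sensitivity (d : nat) (f : ('I_n -> D) -> d.-tuple R)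
    (x : 'I_n -> D) : \bar R :=
  ereal_sup [set (l1norm (vsub (f x) (f y)))%:E | y in [set y | neighbors x y]].

Definition smooth_upper_bound (d : nat) (beta : R)
    (f : ('I_n -> D) -> d.-tuple R) (S : ('I_n -> D) -> R) : Prop :=
  (forall x, (local_sensitivity f x <= (S x)%:E)%E) /\
  (forall x y, neighbors x y -> S x <= expR beta * S y).

(* a randomized mechanism given as M x : Omega -> R^d on a probability space *)
Definition diff_private (dO : measure_display) (Omega : measurableType dO)
    (P : probability Omega R) (d : nat) (eps : R)
    (M : ('I_n -> D) -> Omega -> d.-tuple R) : Prop :=
  forall x y, neighbors x y ->
  forall A : set (d.-tuple R), measurable A ->
    (P (M x @^-1` A) <= (expR eps)%:E * P (M y @^-1` A))%E.

End Privacy.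

From HB Require Import structures.
From mathcomp Require Import all_boot all_order all_algebra.
From mathcomp Require Import all_classical all_reals all_analysis.
From mathcomp Require Import measurable_realfun.
From mathcomp Require Import lra ring.
Set Implicit Arguments. Unset Strict Implicit.
Import Order.TTheory GRing.Theory Num.Theory.
Local Open Scope classical_set_scope.
Local Open Scope ring_scope.

(* Write the mechanism as [f x + c_x Z] with [c_x = S x / alpha'].  For
   neighbours [x], [y] and a Borel set [A], the output lies in [A] iff [Z] lies
   in [B_x], the preimage of [A] under [z |-> f x + c_x z].  Dilating [B_x] by [c_x / c_y] changes the scale to
   [c_y]; smoothness of [S] bounds [|ln (c_x / c_y)|] by [beta'], which costs a
   factor [e^((2-k) eps / 2)].  Translating by [(f x - f y) / c_y] then moves the
   centre to [f y]; this shift has l1-norm at most [alpha'] because [S y] bounds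
   the local sensitivity, which costs a factor [e^(k eps / 2)]. *)

Section AffinePreimages.
Variables (R : realType) (d : nat).

Definition aff (v : d.-tuple R) (c : R) (z : d.-tuple R) := vadd v (vscale c z).

Lemma tnth_aff v c z i : tnth (aff v c z) i = tnth v i + c * tnth z i.
Proof. by rewrite /aff /vadd /vscale !tnth_mktuple. Qed.

Lemma measurable_aff v c : measurable_fun setT (aff v c).
Proof.
apply/measurable_fun_tnthP => i.
have -> : (tnth (T:=R))^~ i \o aff v c = (fun z => tnth v i + c * tnth z i).
  by apply: funext => z /=; rewrite tnth_aff.
apply: measurable_funD; first exact: measurable_cst.
by apply: measurable_funM; [exact: measurable_cst | exact: measurable_tnth].
Qed.

Lemma measurable_aff_preimage v c (A : set (d.-tuple R)) :
  measurable A -> measurable (aff v c @^-1` A).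
Proof. by move=> mA; rewrite -[X in measurable X]setTI; exact: measurable_aff. Qed.

Lemma l1norm_vscale c (v : d.-tuple R) : l1norm (vscale c v) = `|c| * l1norm v.
Proof.
rewrite /l1norm mulr_sumr; apply: eq_bigr => i _.
by rewrite /vscale tnth_mktuple normrM.
Qed.

Lemma l1norm_nseq0 : l1norm (nseq_tuple d (0 : R)) = 0.
Proof. by rewrite /l1norm big1 // => i _; rewrite tnth_nseq normr0. Qed.

Lemma set_dilate_aff_preimage v c c' (A : set (d.-tuple R)) :
  c != 0 -> c' != 0 ->
  set_dilate (c / c') (aff v c @^-1` A) = aff v c' @^-1` A.
Proof.
move=> c0 c'0; apply/seteqP; split.
  move=> _ [s As <-] /=.
  suff -> : aff v c' (vscale (c / c') s) = aff v c s by [].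
  by apply: eq_from_tnth => i; rewrite !tnth_aff /vscale tnth_mktuple; field.
move=> w Aw; exists (vscale (c' / c) w).
  rewrite /=; suff -> : aff v c (vscale (c' / c) w) = aff v c' w by [].
  by apply: eq_from_tnth => i; rewrite !tnth_aff /vscale tnth_mktuple; field.
by apply: eq_from_tnth => i; rewrite /vscale !tnth_mktuple; field; rewrite c0 c'0.
Qed.

Lemma set_translate_aff_preimage u v c (A : set (d.-tuple R)) : c != 0 ->
  set_translate (aff u c @^-1` A) (vscale (- c^-1) (vsub v u)) = aff v c @^-1` A.
Proof.
move=> c0; have shiftE s : aff v c (vadd s (vscale (- c^-1) (vsub v u))) = aff u c s.
  apply: eq_from_tnth => i; rewrite !tnth_aff /vadd /vscale /vsub !tnth_mktuple.
  by rewrite mulrDr mulrA mulrN divff //; lra.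
apply/seteqP; split; first by move=> _ [s As <-] /=; rewrite shiftE.
move=> w Aw; set Delta := vscale (- c^-1) (vsub v u).
have wE : vadd (vsub w Delta) Delta = w.
  by apply: eq_from_tnth => i; rewrite /vadd /vsub !tnth_mktuple; lra.
by exists (vsub w Delta); rewrite //= -shiftE wE.
Qed.

End AffinePreimages.

Section Admissibility.
Variables (R : realType) (d : nat) (lam : {measure set (d.-tuple R) -> \bar R}).
Variables (h : d.-tuple R -> R) (alpha beta : R -> R).
Hypothesis hadm : admissible lam h alpha beta.

Lemma admissible_dilate e lambda A : 0 < e -> 0 <= alpha e ->
  `|lambda| <= beta e -> measurable A ->
  (dens_prob lam h A <=
     (expR (e / 2))%:E * dens_prob lam h (set_dilate (expR lambda) A))%E.
Proof.
move=> e0 alpha0 hl mA.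
have hD : l1norm (nseq_tuple d (0 : R)) <= alpha e by rewrite l1norm_nseq0.
by have [] := hadm e0 hD hl mA.
Qed.

Lemma admissible_translate e Delta A : 0 < e -> 0 <= beta e ->
  l1norm Delta <= alpha e -> measurable A ->
  (dens_prob lam h A <=
     (expR (e / 2))%:E * dens_prob lam h (set_translate A Delta))%E.
Proof.
move=> e0 beta0 hD mA.
have hl : `|0 : R| <= beta e by rewrite normr0.
by have [] := hadm e0 hD hl mA.
Qed.

End Admissibility.

Lemma neighbors_sym D n (x y : 'I_n -> D) : neighbors x y -> neighbors y x.
Proof. by move=> [i [hi hj]]; exists i; split=> [/esym /hi | j /hj ->]. Qed.

Lemma l1norm_vsub_le_smooth (R : realType) D n d b (f : ('I_n -> D) -> d.-tuple R) S x y :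
  smooth_upper_bound b f S -> neighbors x y -> l1norm (vsub (f x) (f y)) <= S x.
Proof.
move=> [hLS _] nxy; rewrite -lee_fin; apply: le_trans (hLS x).
by apply: ereal_sup_ubound; exists y.
Qed.

Lemma norm_ln_ratio_le (R : realType) (p q b : R) : 0 < p -> 0 < q ->
  p <= expR b * q -> q <= expR b * p -> `|ln (p / q)| <= b.
Proof.
move=> p0 q0 hpq hqp.
have lnle u w : 0 < u -> 0 < w -> u <= expR b * w -> ln u <= b + ln w.
  move=> u0 w0 huw; rewrite -(expRK b) -lnM ?posrE ?expR_gt0 //.
  by rewrite ler_ln ?posrE ?mulr_gt0 ?expR_gt0.
have := lnle _ _ p0 q0 hpq; have := lnle _ _ q0 p0 hqp.
by rewrite lnM ?posrE ?invr_gt0 // lnV ?posrE // ler_norml; lra.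
Qed.

Unset Implicit Arguments.

Theorem theorem1 (R : realType) (d : nat)
  (lam : {measure set (d.-tuple R) -> \bar R})
  (Hlam : is_lebesgue_measure lam)
  (h : d.-tuple R -> R) (Hh : prob_density lam h)
  (alpha beta : R -> R)
  (Halpha : forall e : R, 0 < e -> 0 < alpha e)
  (Hbeta : forall e : R, 0 < e -> 0 < beta e)
  (Hadm : admissible lam h alpha beta)
  (eps k : R) (Heps : 0 < eps) (Hk : 0 < k < 2)
  (D : Type) (n : nat)
  (f : ('I_n -> D) -> d.-tuple R) (S : ('I_n -> D) -> R)
  (HSpos : forall x, 0 < S x)
  (HS : smooth_upper_bound (beta ((2 - k) * eps)) f S)
  (dO : measure_display) (Omega : measurableType dO) (P : probability Omega R)
  (Z : Omega -> d.-tuple R) (HZm : measurable_fun setT Z)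
  (HZ : forall A : set (d.-tuple R), measurable A ->
          P (Z @^-1` A) = dens_prob lam h A) :
  diff_private P eps
    (fun (x : 'I_n -> D) (w : Omega) =>
       vadd (f x) (vscale (S x / alpha (k * eps)) (Z w))).
Proof.
move=> x y nxy A mA; case/andP: Hk => k0 k2.
have ke : 0 < k * eps by rewrite mulr_gt0.
have ke' : 0 < (2 - k) * eps by rewrite mulr_gt0 // subr_gt0.
set a := alpha (k * eps); have a0 : 0 < a by exact: Halpha.
set cx := S x / a; set cy := S y / a.
have cx0 : cx != 0 by rewrite gt_eqF // divr_gt0.
have cy0 : cy != 0 by rewrite gt_eqF // divr_gt0.
change (P (Z @^-1` (aff (f x) cx @^-1` A)) <=
        (expR eps)%:E * P (Z @^-1` (aff (f y) cy @^-1` A)))%E.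
rewrite !HZ; try exact: measurable_aff_preimage.
have ratioE : expR (ln (S x / S y)) = cx / cy.
  by rewrite lnK ?posrE ?divr_gt0 // /cx /cy; field; rewrite !gt_eqF.
have hlambda : `|ln (S x / S y)| <= beta ((2 - k) * eps).
  by case: HS => _ hsm; apply: norm_ln_ratio_le; rewrite ?hsm //; exact: neighbors_sym.
have dil := admissible_dilate Hadm ke' (ltW (Halpha _ ke')) hlambda
  (measurable_aff_preimage (f x) cx mA).
rewrite ratioE set_dilate_aff_preimage // in dil.
have hshift : l1norm (vscale (- cy^-1) (vsub (f y) (f x))) <= a.
  rewrite l1norm_vscale normrN gtr0_norm ?invr_gt0 ?divr_gt0 //.
  rewrite ler_pdivrMl ?divr_gt0 // /cy divfK ?gt_eqF //.
  exact: l1norm_vsub_le_smooth HS (neighbors_sym nxy).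
have sl := admissible_translate Hadm ke (ltW (Hbeta _ ke)) hshift
  (measurable_aff_preimage (f x) cy mA).
rewrite set_translate_aff_preimage // in sl.
have -> : expR eps = expR ((2 - k) * eps / 2) * expR (k * eps / 2).
  by rewrite -expRD; congr expR; field.
rewrite EFinM -muleA; apply: (le_trans dil).
by apply: lee_wpmul2l; rewrite ?lee_fin ?expR_ge0.
Qed.
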